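(* The two-dimensional subalgebras of ${\rm S}_2$ are exactly $\langle e_1,e_2\rangle$, $\langle e_1\pm e_3,e_2\rangle$ and $\langle e_1,\alpha e_2+e_3\rangle$ ($\alpha\in\mathbb{C}$). Up to automorphisms of ${\rm S}_2$, every two-dimensional subalgebra is equivalent to one of $\langle e_1,e_2\rangle$, $\langle e_1+e_3,e_2\rangle$, $\langle e_1-e_3,e_2\rangle$, $\langle e_1,e_3\rangle$.
   Context: ${\rm S}_2$ is the complex algebra with basis $e_1,e_2,e_3$, unit $e_1$ ($e_1e_i=e_ie_1=e_i$), $e_2e_3=e_2$, $e_3e_2=-e_2$, $e_3e_3=e_1$; all other products of basis elements are zero. A subalgebra is a linear subspace closed under multiplication (it need not contain $e_1$). Equivalence up to automorphisms means one is mapped onto the other by an algebra automorphism. $\langle S\rangle$ denotes linear span. *)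

From HB Require Import structures.
From mathcomp Require Import all_boot all_order all_algebra.
From mathcomp Require Import complex.
From mathcomp Require Import reals.
Set Implicit Arguments. Unset Strict Implicit. Unset Printing Implicit Defensive.
Import GRing.Theory.
Local Open Scope ring_scope.

Section S2.
Variable R : realType.
Local Notation C := R[i].

Definition S2 := 'rV[C]_3.
Definition ebas (k : 'I_3) : S2 := delta_mx 0 k.
Definition e1 : S2 := ebas (@Ordinal 3 0 isT).
Definition e2 : S2 := ebas (@Ordinal 3 1 isT).
Definition e3 : S2 := ebas (@Ordinal 3 2 isT).

(* multiplication table of basis elements (indices 0,1,2 = e_1,e_2,e_3) *)
Definition emul (i j : 'I_3) : S2 :=
  match nat_of_ord i, nat_of_ord j with
  | 0, _ => ebas j
  | _, 0 => ebas i
  | 1, 2 => e2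
  | 2, 1 => - e2
  | 2, 2 => e1
  | _, _ => 0
  end.

Definition s2mul (u v : S2) : S2 :=
  \sum_(i < 3) \sum_(j < 3) (u 0 i * v 0 j) *: emul i j.

Definition is_subalgebra (U : {vspace S2}) : Prop :=
  forall u v, u \in U -> v \in U -> s2mul u v \in U.

Definition is_automorphism (f : 'End(S2)) : Prop :=
  bijective (fun x : S2 => f x) /\
  forall u v, f (s2mul u v) = s2mul (f u) (f v).
End S2.

(* In coordinates a e1 + b e2 + c e3 the product of S2 is
   (a a' + c c', a b' + b a' + b c' - c b', a c' + c a').
   If a two-dimensional subalgebra U contains e2, then U = <(a,0,c), e2> and the
   square (a^2 + c^2, 0, 2ac) of (a,0,c) must lie in U, which forces c = 0, a or -a.
   Otherwise U is a complement of the line <e2>, so e1 - t e2 lies in U; then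
   (e1 - t e2)^2 - (e1 - t e2) = -t e2 forces t = 0, and writing e3 - s e2 in U gives
   U = <e1, -s e2 + e3>.  Finally, the shear fixing e1, e2 and sending e3 to
   e3 - al e2 is an automorphism mapping <e1, al e2 + e3> onto <e1, e3>. *)

From HB Require Import structures.
From mathcomp Require Import all_boot all_order all_algebra.
From mathcomp Require Import complex reals ring.
Import GRing.Theory.
Set Implicit Arguments. Unset Strict Implicit. Unset Printing Implicit Defensive.
Local Open Scope ring_scope.

Section Span2.
Variables (K : fieldType) (vT : vectType K).
Implicit Types (U : {vspace vT}) (p q v x : vT).

Lemma span2P p q x :
  reflect (exists a b, x = a *: p + b *: q) (x \in <<[:: p; q]>>%VS).
Proof.
rewrite span_cons span_seq1; apply: (iffP memv_addP).
  by case=> _ /vlineP[a ->] [_ /vlineP[b ->] ->]; exists a, b.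
by case=> a [b ->]; exists (a *: p); rewrite ?memvZ ?memv_line //;
  exists (b *: q); rewrite ?memvZ ?memv_line.
Qed.

Lemma dim_span2 p q : q != 0 -> p \notin <[q]>%VS -> \dim <<[:: p; q]>> = 2%N.
Proof.
move=> q0 pNq; have : free [:: p; q] by rewrite free_cons seq1_free span_seq1 pNq.
exact: eqP.
Qed.

Lemma span2_eq U p q :
  p \in U -> q \in U -> \dim <<[:: p; q]>> = \dim U -> U = <<[:: p; q]>>%VS.
Proof.
move=> pU qU dimpq; apply/eqP; rewrite eq_sym eqEdim dimpq leqnn andbT.
by apply/span_subvP => x; rewrite !inE => /pred2P[]->.
Qed.

Lemma addv_line_decomp U v x :
  (\dim U).+1 = dim vT -> v \notin U -> exists t, x - t *: v \in U.
Proof.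
move=> dimU vNU.
have ltU : (\dim U < \dim (U + <[v]>))%N.
  rewrite (ltn_leqif (dimv_leqif_sup (addvSl U <[v]>))).
  by apply: contra vNU => /subvP; apply; apply: subvP (addvSr U _) _ (memv_line v).
have /eqP full : (U + <[v]> == fullv)%VS by rewrite eqEdim subvf dimvf -dimU.
have : x \in (U + <[v]>)%VS by rewrite full memvf.
by case/memv_addP => u uU [_ /vlineP[t ->] ->]; exists t; rewrite addrK.
Qed.

End Span2.

Lemma sqr_proportional_cases (F : idomainType) (a c k : F) :
  (a != 0) || (c != 0) -> a ^+ 2 + c ^+ 2 = k * a -> 2 * a * c = k * c ->
  a != 0 /\ [\/ c = 0, c = a | c = - a].
Proof.
move=> ac Ea Ec; have [c0|c0] := eqVneq c 0.
  by move: ac; rewrite c0 eqxx orbF; split=> //; constructor 1.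
have k2a : k = 2 * a by apply: (mulIf c0); rewrite -Ec mulrAC.
have sq : c ^+ 2 = a ^+ 2.
  by apply: (addrI (a ^+ 2)); rewrite Ea k2a; ring.
have : (c - a) * (c + a) == 0 by rewrite -subr_sqr sq subrr.
rewrite mulf_eq0 subr_eq0 addr_eq0 => ca.
have a0 : a != 0 by apply: contraTneq c0 => a0; move: ca; rewrite a0 oppr0 orbb negbK.
by split=> //; case/orP: ca => /eqP ca; [constructor 2 | constructor 3].
Qed.

Section S2Algebra.
Variable R : realType.
Local Notation C := R[i].
Local Notation S := (S2 R).
Local Notation e1 := (e1 R).
Local Notation e2 := (e2 R).
Local Notation e3 := (e3 R).
Local Notation i0 := (@Ordinal 3 0 isT).
Local Notation i1 := (@Ordinal 3 1 isT).
Local Notation i2 := (@Ordinal 3 2 isT).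
Implicit Types (p q x y u v : S) (a b c k al : C).

Lemma row3P (x y : S) :
  x 0 i0 = y 0 i0 -> x 0 i1 = y 0 i1 -> x 0 i2 = y 0 i2 -> x = y.
Proof.
move=> E0 E1 E2; apply/rowP => -[[|[|[|j]]] lt_j3] //.
- by rewrite (_ : Ordinal lt_j3 = i0) //; apply: val_inj.
- by rewrite (_ : Ordinal lt_j3 = i1) //; apply: val_inj.
- by rewrite (_ : Ordinal lt_j3 = i2) //; apply: val_inj.
Qed.

(* Defined entrywise rather than as [a *: e1 + b *: e2 + c *: e3]: failed
   unifications between distinct closed vectors then stay cheap. *)
Definition s2vec a b c : S := \row_(j < 3) [:: a; b; c]`_j.

Lemma s2vec_entry0 a b c : s2vec a b c 0 i0 = a.
Proof. by rewrite mxE. Qed.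
Lemma s2vec_entry1 a b c : s2vec a b c 0 i1 = b.
Proof. by rewrite mxE. Qed.
Lemma s2vec_entry2 a b c : s2vec a b c 0 i2 = c.
Proof. by rewrite mxE. Qed.
Definition s2vec_entry := (s2vec_entry0, s2vec_entry1, s2vec_entry2).

Lemma s2vec_eta x : x = s2vec (x 0 i0) (x 0 i1) (x 0 i2).
Proof. by apply: row3P; rewrite !mxE. Qed.

Lemma s2vec_inj a b c a' b' c' :
  s2vec a b c = s2vec a' b' c' -> [/\ a = a', b = b' & c = c'].
Proof.
by move=> E; split; [move: E => /rowP/(_ i0) | move: E => /rowP/(_ i1)
  | move: E => /rowP/(_ i2)]; rewrite !s2vec_entry.
Qed.

Lemma e1_s2vec : e1 = s2vec 1 0 0.
Proof. by apply: row3P; rewrite !mxE. Qed.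
Lemma e2_s2vec : e2 = s2vec 0 1 0.
Proof. by apply: row3P; rewrite !mxE. Qed.
Lemma e3_s2vec : e3 = s2vec 0 0 1.
Proof. by apply: row3P; rewrite !mxE. Qed.

Lemma s2vecD a b c a' b' c' :
  s2vec a b c + s2vec a' b' c' = s2vec (a + a') (b + b') (c + c').
Proof. by apply: row3P; rewrite !mxE. Qed.
Lemma s2vecN a b c : - s2vec a b c = s2vec (- a) (- b) (- c).
Proof. by apply: row3P; rewrite !mxE. Qed.
Lemma s2vecZ k a b c : k *: s2vec a b c = s2vec (k * a) (k * b) (k * c).
Proof. by apply: row3P; rewrite !mxE. Qed.

Lemma s2vec_congr a b c a' b' c' :
  a = a' -> b = b' -> c = c' -> s2vec a b c = s2vec a' b' c'.
Proof. by move=> -> -> ->. Qed.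

Lemma s2mulE u v : s2mul u v =
  s2vec (u 0 i0 * v 0 i0 + u 0 i2 * v 0 i2)
        (u 0 i0 * v 0 i1 + u 0 i1 * v 0 i0 + u 0 i1 * v 0 i2 - u 0 i2 * v 0 i1)
        (u 0 i0 * v 0 i2 + u 0 i2 * v 0 i0).
Proof.
rewrite /s2mul !big_ord_recl !big_ord0 /emul /=.
have -> : ord0 = i0 :> 'I_3 by apply: val_inj.
have -> : lift i0 ord0 = i1 by apply: val_inj.
have -> : lift i0 (lift ord0 ord0) = i2 by apply: val_inj.
by apply: row3P; rewrite !mxE /=; ring.
Qed.

Lemma s2mul_s2vec a b c a' b' c' : s2mul (s2vec a b c) (s2vec a' b' c') =
  s2vec (a * a' + c * c') (a * b' + b * a' + b * c' - c * b') (a * c' + c * a').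
Proof. by rewrite s2mulE !s2vec_entry. Qed.

(* [congr s2vec] would first try to close the goal by conversion of the
   matrices, which is very slow. *)
Ltac s2vec_ring :=
  rewrite ?e1_s2vec ?e2_s2vec ?e3_s2vec ?(s2vecN, s2vecD, s2vecZ, s2mul_s2vec);
  apply: s2vec_congr; ring.

Lemma s2mulDl x y v : s2mul (x + y) v = s2mul x v + s2mul y v.
Proof. by rewrite (s2vec_eta x) (s2vec_eta y) (s2vec_eta v); s2vec_ring. Qed.
Lemma s2mulDr x y v : s2mul v (x + y) = s2mul v x + s2mul v y.
Proof. by rewrite (s2vec_eta x) (s2vec_eta y) (s2vec_eta v); s2vec_ring. Qed.
Lemma s2mulZl k x v : s2mul (k *: x) v = k *: s2mul x v.
Proof. by rewrite (s2vec_eta x) (s2vec_eta v); s2vec_ring. Qed.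
Lemma s2mulZr k x v : s2mul v (k *: x) = k *: s2mul v x.
Proof. by rewrite (s2vec_eta x) (s2vec_eta v); s2vec_ring. Qed.

Lemma subalgebra_span2 p q :
  (forall x y, x \in [:: p; q] -> y \in [:: p; q] ->
     exists a b, s2mul x y = a *: p + b *: q) ->
  is_subalgebra <<[:: p; q]>>%VS.
Proof.
have pX : p \in [:: p; q] by rewrite inE eqxx.
have qX : q \in [:: p; q] by rewrite !inE eqxx orbT.
move=> table _ _ /span2P[a [b ->]] /span2P[c [d ->]].
rewrite !(s2mulDl, s2mulDr, s2mulZl, s2mulZr).
have [[ap [bp ->]] [[aq [bq ->]] [[ap' [bp' ->]] [aq' [bq' ->]]]]] :=
  (table _ _ pX pX, (table _ _ pX qX, (table _ _ qX pX, table _ _ qX qX))).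
by rewrite !(memvD, memvZ, memv_span pX, memv_span qX).
Qed.

Lemma mem_line_e2 x : (x \in <[e2]>%VS) = (x 0 i0 == 0) && (x 0 i2 == 0).
Proof.
apply/vlineP/andP => [[k ->] | [/eqP x0 /eqP x2]].
  by rewrite e2_s2vec s2vecZ !s2vec_entry !mulr0.
by exists (x 0 i1); rewrite {1}(s2vec_eta x) x0 x2; s2vec_ring.
Qed.

Lemma s2vec_eq0 a b c : (s2vec a b c == 0) = [&& a == 0, b == 0 & c == 0].
Proof.
have -> : 0 = s2vec 0 0 0 by apply: row3P; rewrite !mxE.
by apply/eqP/and3P => [/s2vec_inj[-> -> ->] | [/eqP-> /eqP-> /eqP->]].
Qed.

Lemma e2_neq0 : e2 != 0.
Proof. by rewrite e2_s2vec s2vec_eq0 oner_eq0 andbF. Qed.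

Lemma subalg_e1_e2 :
  is_subalgebra (span [:: e1; e2]) /\ \dim (span [:: e1; e2]) = 2%N.
Proof.
split; last by apply: dim_span2;
  [exact: e2_neq0 | rewrite mem_line_e2 !mxE /= oner_eq0].
apply: subalgebra_span2 => x y; rewrite !inE => /pred2P[]-> /pred2P[]->.
- by exists 1, 0; s2vec_ring.
- by exists 0, 1; s2vec_ring.
- by exists 0, 1; s2vec_ring.
- by exists 0, 0; s2vec_ring.
Qed.

Lemma subalg_e1De3_e2 :
  is_subalgebra (span [:: e1 + e3; e2]) /\ \dim (span [:: e1 + e3; e2]) = 2%N.
Proof.
split; last by apply: dim_span2;
  [exact: e2_neq0 | rewrite mem_line_e2 !mxE /= addr0 oner_eq0].
apply: subalgebra_span2 => x y; rewrite !inE => /pred2P[]-> /pred2P[]->.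
- by exists 2, 0; s2vec_ring.
- by exists 0, 0; s2vec_ring.
- by exists 0, 2; s2vec_ring.
- by exists 0, 0; s2vec_ring.
Qed.

Lemma subalg_e1Be3_e2 :
  is_subalgebra (span [:: e1 - e3; e2]) /\ \dim (span [:: e1 - e3; e2]) = 2%N.
Proof.
split; last by apply: dim_span2;
  [exact: e2_neq0 | rewrite mem_line_e2 !mxE /= subr0 oner_eq0].
apply: subalgebra_span2 => x y; rewrite !inE => /pred2P[]-> /pred2P[]->.
- by exists 2, 0; s2vec_ring.
- by exists 0, 2; s2vec_ring.
- by exists 0, 0; s2vec_ring.
- by exists 0, 0; s2vec_ring.
Qed.

Lemma subalg_e1_Ze2De3 al :
  is_subalgebra (span [:: e1; al *: e2 + e3]) /\
  \dim (span [:: e1; al *: e2 + e3]) = 2%N.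
Proof.
split.
  apply: subalgebra_span2 => x y; rewrite !inE => /pred2P[]-> /pred2P[]->.
  - by exists 1, 0; s2vec_ring.
  - by exists 0, 1; s2vec_ring.
  - by exists 0, 1; s2vec_ring.
  - by exists 1, 0; s2vec_ring.
apply: dim_span2.
  by rewrite e2_s2vec e3_s2vec s2vecZ s2vecD s2vec_eq0 !mulr0 !add0r oner_eq0 !andbF.
apply/vlineP => -[k].
rewrite e1_s2vec e2_s2vec e3_s2vec s2vecZ s2vecD s2vecZ => /s2vec_inj[+ _ _].
by rewrite !(mulr0, addr0) => /eqP; rewrite oner_eq0.
Qed.

Lemma subalgebra_e2_mem U :
  is_subalgebra U -> \dim U = 2%N -> e2 \in U ->
  [\/ U = span [:: e1; e2], U = span [:: e1 + e3; e2] | U = span [:: e1 - e3; e2]].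
Proof.
move=> subU dimU e2U.
have [x xU xNe2] : exists2 x, x \in U & x \notin <[e2]>%VS.
  by apply/subvPn; apply/negP => /dimvS; rewrite dimU dim_vline e2_neq0.
move: xU xNe2; rewrite (s2vec_eta x).
move: (x 0 i0) (x 0 i1) (x 0 i2) => a b c xU xNe2.
have yU : s2vec a 0 c \in U.
  have -> : s2vec a 0 c = s2vec a b c - b *: e2 by s2vec_ring.
  by rewrite memvB ?memvZ.
have ac : (a != 0) || (c != 0).
  by move: xNe2; rewrite mem_line_e2 !s2vec_entry negb_and.
have Uy : U = span [:: s2vec a 0 c; e2].
  apply: span2_eq yU e2U _; rewrite dimU; apply: dim_span2; first exact: e2_neq0.
  by rewrite mem_line_e2 !s2vec_entry negb_and.
have [k [m sq]] :
    exists k m, s2mul (s2vec a 0 c) (s2vec a 0 c) = k *: s2vec a 0 c + m *: e2.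
  by apply/span2P; rewrite -Uy; exact: subU.
rewrite e2_s2vec !s2vecZ s2vecD s2mul_s2vec in sq; case/s2vec_inj: sq => Ea _ Ec.
have Ea' : a ^+ 2 + c ^+ 2 = k * a by move: Ea; rewrite mulr0 addr0 => <-; ring.
have Ec' : 2 * a * c = k * c by move: Ec; rewrite mulr0 addr0 => <-; ring.
have [a0 c_cases] := sqr_proportional_cases ac Ea' Ec'.
have nU : s2vec 1 0 (a^-1 * c) \in U.
  by have := memvZ a^-1 yU; rewrite s2vecZ mulVf // mulr0.
have spanU w : w \in U -> \dim (span [:: w; e2]) = 2%N -> U = span [:: w; e2].
  by move=> wU dimw; apply: span2_eq wU e2U _; rewrite dimw dimU.
case: c_cases => c_eq; move: nU; rewrite c_eq ?mulr0 ?mulrN ?mulVf // => nU.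
- by constructor 1; apply: (spanU _ _ subalg_e1_e2.2); rewrite e1_s2vec.
- constructor 2; apply: (spanU _ _ subalg_e1De3_e2.2).
  by rewrite (_ : e1 + e3 = s2vec 1 0 1) //; s2vec_ring.
- constructor 3; apply: (spanU _ _ subalg_e1Be3_e2.2).
  by rewrite (_ : e1 - e3 = s2vec 1 0 (- 1)) //; s2vec_ring.
Qed.

Lemma subalgebra_e2_notin U :
  is_subalgebra U -> \dim U = 2%N -> e2 \notin U ->
  exists al, U = span [:: e1; al *: e2 + e3].
Proof.
move=> subU dimU e2NU.
have dimS : (\dim U).+1 = dim S by rewrite dimU dim_matrix.
have [t e1tU] := addv_line_decomp e1 dimS e2NU.
have t0 : t = 0.
  apply: contraNeq e2NU => t0.
  have sq : s2mul (e1 - t *: e2) (e1 - t *: e2) - (e1 - t *: e2) = - t *: e2.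
    by s2vec_ring.
  have := memvB (subU _ _ e1tU e1tU) e1tU; rewrite sq => /(memvZ (- t)^-1).
  by rewrite scalerA mulVf ?scale1r // oppr_eq0.
have e1U : e1 \in U by move: e1tU; rewrite t0 scale0r subr0.
have [s e3sU] := addv_line_decomp e3 dimS e2NU.
exists (- s); apply: span2_eq e1U _ _; first by rewrite scaleNr addrC.
by rewrite dimU; exact: (subalg_e1_Ze2De3 _).2.
Qed.

Lemma s2_subalgebra_dim2 U :
  is_subalgebra U -> \dim U = 2%N ->
  [\/ U = span [:: e1; e2], U = span [:: e1 + e3; e2],
      U = span [:: e1 - e3; e2] | exists al, U = span [:: e1; al *: e2 + e3]].
Proof.
move=> subU dimU; have [e2U|e2NU] := boolP (e2 \in U).
  by case: (subalgebra_e2_mem subU dimU e2U) => ->;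
    [constructor 1 | constructor 2 | constructor 3].
by constructor 4; exact: subalgebra_e2_notin.
Qed.

Definition shear_mx al : 'M[C]_3 := 1%:M - al *: delta_mx i2 i1.
Definition shear al : 'End(S) := linfun (mulmxr (shear_mx al) : {linear S -> S}).

Lemma shear_s2vec al a b c : shear al (s2vec a b c) = s2vec a (b - al * c) c.
Proof.
rewrite lfunE /= /shear_mx.
by apply: row3P; rewrite !mxE !big_ord_recl big_ord0 !mxE /=; ring.
Qed.

Lemma shear_automorphism al : is_automorphism (shear al).
Proof.
split.
  by exists (shear (- al)); move=> x; rewrite (s2vec_eta x) !shear_s2vec;
    apply: s2vec_congr; ring.
move=> u v; rewrite (s2vec_eta u) (s2vec_eta v) s2mul_s2vec !shear_s2vec s2mul_s2vec.
by apply: s2vec_congr; ring.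
Qed.

Lemma shear_span al :
  (shear al @: span [:: e1; (al *: e2 + e3)%R])%VS = span [:: e1; e3].
Proof.
rewrite limg_span /=.
have -> : shear al e1 = e1 by rewrite e1_s2vec shear_s2vec mulr0 subr0.
have -> : shear al (al *: e2 + e3) = e3.
  by rewrite e2_s2vec e3_s2vec s2vecZ s2vecD shear_s2vec; apply: s2vec_congr; ring.
by [].
Qed.

Lemma id_automorphism : is_automorphism (\1%VF : 'End(S)).
Proof.
split=> [|u v]; last by rewrite !id_lfunE.
by exists id; move=> x; rewrite id_lfunE.
Qed.

End S2Algebra.

Theorem mainTheorem17 (R : realType) :
  (forall U : {vspace S2 R},
     (is_subalgebra U /\ \dim U = 2%N) <->
     [\/ U = (span [:: e1 R; e2 R]),
         U = (span [:: e1 R + e3 R; e2 R]),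
         U = (span [:: e1 R - e3 R; e2 R])
       | exists alpha : R[i], U = (span [:: e1 R; alpha *: e2 R + e3 R])])
  /\
  (forall U : {vspace S2 R},
     is_subalgebra U -> \dim U = 2%N ->
     exists f : 'End(S2 R), is_automorphism f /\
       [\/ (f @: U)%VS = (span [:: e1 R; e2 R]),
           (f @: U)%VS = (span [:: e1 R + e3 R; e2 R]),
           (f @: U)%VS = (span [:: e1 R - e3 R; e2 R])
         | (f @: U)%VS = (span [:: e1 R; e3 R])]).
Proof.
split=> [U | U subU dimU].
  split=> [[subU dimU] | ]; first exact: s2_subalgebra_dim2.
  case=> [->|->|->|[al ->]]; [exact: subalg_e1_e2 | exact: subalg_e1De3_e2
    | exact: subalg_e1Be3_e2 | exact: subalg_e1_Ze2De3].
case: (s2_subalgebra_dim2 subU dimU) => [->|->|->|[al ->]].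
- by exists \1%VF; split; [exact: id_automorphism | constructor 1; rewrite lim1g].
- by exists \1%VF; split; [exact: id_automorphism | constructor 2; rewrite lim1g].
- by exists \1%VF; split; [exact: id_automorphism | constructor 3; rewrite lim1g].
- by exists (shear al); split; [exact: shear_automorphism | constructor 4; exact: shear_span].
Qed.
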